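(* Let $k\ge 2$ and $n\ge 3$ be integers. Let $K$ be the graph with vertex set $\{a,b,v_1,\dots,v_{n-1}\}$ in which $v_1,\dots,v_{n-1}$ are pairwise adjacent, $a$ is adjacent exactly to $v_1,\dots,v_{n-2}$, and $b$ is adjacent exactly to $v_{n-1}$. Then for all integers $0\le x,y\le kn-2$, the graph $K$ has a $(kn-1,k)$-coloring $c$ with $c(a)=x$ and $c(b)=y$ if and only if $x\neq y$.
   Context: For positive integers $p,q$, a $(p,q)$-coloring of a graph $G$ is a map $c:V(G)\to\{0,1,\dots,p-1\}$ such that for every edge $xy\in E(G)$ one has $q\le |c(x)-c(y)|\le p-q$. *)

From mathcomp Require Import all_boot.
Set Implicit Arguments. Unset Strict Implicit. Unset Printing Implicit Defensive.

Definition natdist (m n : nat) : nat := (m - n) + (n - m).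

Definition pq_coloring (V : Type) (p q : nat) (adj : V -> V -> bool)
  (c : V -> nat) : Prop :=
  (forall v, c v < p) /\
  (forall u v, adj u v -> q <= natdist (c u) (c v) <= p - q).

(* Vertices of K: a, b and v_1, ..., v_m  (Vv i stands for v_(i+1), i : 'I_m). *)
Inductive Kvert (m : nat) : Type :=
| Ka : Kvert m
| Kb : Kvert m
| Kv : 'I_m -> Kvert m.
Arguments Ka {m}. Arguments Kb {m}.

Definition K_adj (n : nat) (u w : Kvert n.-1) : bool :=
  match u, w with
  | Kv i, Kv j => i != j
  | Ka, Kv i | Kv i, Ka => (i : nat) < n - 2
  | Kb, Kv i | Kv i, Kb => (i : nat) == n - 2
  | _, _ => false
  end.

From mathcomp Require Import all_boot zify.

(* Read colors in Z/pZ, p = kn - 1: an edge needs cyclic distance at least k.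
   If c(a) = c(b), then c(a), c(v_1), ..., c(v_(n-1)) are n pairwise far points,
   so the arcs [c, c + k) are disjoint and nk <= kn - 1, which is absurd.
   Conversely, rotations and reflections of Z/pZ preserve colorings, so we may
   take c(a) = 0 and 0 < c(b) <= p - k; then v_1, ..., v_(n-2) get the colors
   k, 2k, ..., (n-2)k and v_(n-1) gets 0, or (n-1)k + c(b) - 1 when c(b) < k. *)

Set Implicit Arguments.
Unset Strict Implicit.
Unset Printing Implicit Defensive.

Definition far (p q u v : nat) : bool := q <= natdist u v <= p - q.

Lemma far_sym p q u v : far p q u v -> far p q v u.
Proof. by rewrite /far /natdist addnC. Qed.

Lemma far_shift p q u v t : u < p -> v < p -> t < p ->
  far p q u v -> far p q ((u + t) %% p) ((v + t) %% p).
Proof.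
move=> up vp tp; have p_gt0 : 0 < p by lia.
rewrite !modnD // !modn_small //.
by case: leqP; case: leqP; rewrite /far /natdist; lia.
Qed.

Lemma far_reflect p q u v : u < p -> v < p ->
  far p q u v -> far p q ((p - u) %% p) ((p - v) %% p).
Proof.
have reflE w : w < p -> (p - w) %% p = if w == 0 then 0 else p - w.
  by case: eqP => [->|/eqP w0 wp]; rewrite ?subn0 ?modnn // modn_small //; lia.
by move=> up vp; rewrite !reflE //; case: eqP; case: eqP; rewrite /far /natdist; lia.
Qed.

Lemma far_arcs_disjoint p q u v i j : u < p -> v < p -> i < q -> j < q ->
  far p q u v -> (u + i) %% p != (v + j) %% p.
Proof.
move=> up vp iq jq faruv.
have [ip jp] : i < p /\ j < p by move: faruv; rewrite /far; lia.
move: faruv; have p_gt0 : 0 < p by lia.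
rewrite !modnD // !modn_small //.
by case: leqP; case: leqP; rewrite /far /natdist; lia.
Qed.

Lemma far_family_card (I : finType) p q (f : I -> nat) : q <= p ->
  (forall i, f i < p) -> (forall i j, i != j -> far p q (f i) (f j)) ->
  #|I| * q <= p.
Proof.
move=> qp fp farf; have [p0|p_gt0] := posnP p.
  by move: qp; rewrite p0 leqn0 => /eqP ->; rewrite muln0.
pose arc (ij : I * 'I_q) : 'I_p := Ordinal (ltn_pmod (f ij.1 + ij.2) p_gt0).
suff /leq_card : injective arc by rewrite card_prod !card_ord.
move=> [i j] [i' j'] /(congr1 val) /= /eqP.
have [<-|ii'] := eqVneq i i'.
  rewrite eqn_modDl !modn_small ?(leq_trans _ qp) // => /eqP jj'.
  by congr pair; apply: val_inj.
by rewrite (negbTE (far_arcs_disjoint (fp i) (fp i') (ltn_ord j) (ltn_ord j') (farf _ _ ii'))).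
Qed.

Lemma pq_coloring_comp (V : Type) p q (adj : V -> V -> bool) c (h : nat -> nat) :
  (forall u, u < p -> h u < p) ->
  (forall u v, u < p -> v < p -> far p q u v -> far p q (h u) (h v)) ->
  pq_coloring p q adj c -> pq_coloring p q adj (h \o c).
Proof.
move=> hp hfar [cp cfar]; split=> [v|u v /cfar]; first exact: hp.
exact: hfar.
Qed.

Lemma K_coloring_neq k n (c : Kvert n.-1 -> nat) : 0 < k -> 1 < n ->
  pq_coloring (k * n - 1) k (@K_adj n) c -> c Ka != c Kb.
Proof.
move=> k_gt0 n_gt1 [cp cfar]; apply/eqP => cab.
have farKa j : far (k * n - 1) k (c Ka) (c (Kv j)).
  have [jlt|jge] := ltnP j (n - 2); first exact: cfar.
  by rewrite cab; apply: cfar => /=; have := ltn_ord j; lia.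
pose f (o : option 'I_n.-1) := if o is Some i then c (Kv i) else c Ka.
suff: #|{: option 'I_n.-1}| * k <= k * n - 1 by rewrite card_option card_ord; nia.
apply: (far_family_card (f := f)) => [|[i|]|[i|] [j|] ij /=].
- nia.
- exact: cp.
- exact: cp.
- by apply: cfar => /=; apply: contraNneq ij => ->.
- exact/far_sym/farKa.
- exact: farKa.
- by rewrite eqxx in ij.
Qed.

Definition K_std_coloring k n y (v : Kvert n.-1) : nat :=
  match v with
  | Ka => 0
  | Kb => y
  | Kv i => if i < n - 2 then k * i.+1 else if y < k then k * n.-1 + y - 1 else 0
  end.

Lemma pq_coloring_K_std k n y : 0 < k -> 2 < n -> 0 < y <= k * n - 1 - k ->
  pq_coloring (k * n - 1) k (@K_adj n) (@K_std_coloring k n y).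
Proof.
move=> k_gt0 n_gt2 /andP [y_gt0 y_le]; set c := @K_std_coloring k n y.
have cv_lt i : c (Kv i) < k * n - 1.
  by rewrite /c /=; have := ltn_ord i; repeat case: ifP; nia.
split=> [[||i] /=|]; [nia | nia | exact: cv_lt |].
have farKa (i : 'I_n.-1) : i < n - 2 -> far (k * n - 1) k (c Ka) (c (Kv i)).
  by move=> lt_i; rewrite /c /= lt_i /far /natdist; nia.
have farKb (i : 'I_n.-1) : i == n - 2 :> nat -> far (k * n - 1) k (c Kb) (c (Kv i)).
  by move=> /eqP eq_i; rewrite /c /= eq_i ltnn /far /natdist; case: ifP; nia.
have farKv (i j : 'I_n.-1) : i < j -> far (k * n - 1) k (c (Kv i)) (c (Kv j)).
  move=> lt_ij; rewrite /c /= /far /natdist.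
  have [lt_j|ge_j] := ltnP j (n - 2); first by rewrite (ltn_trans lt_ij lt_j); nia.
  have j_last : (j : nat) = n - 2 by have := ltn_ord j; lia.
  have lt_i : i < n - 2 by rewrite -j_last.
  by rewrite lt_i; case: ifP; nia.
case=> [||i] [||j] //=; rewrite -/(far _ _ _ _); try by [apply: farKa | apply: farKb].
- by move=> ?; apply/far_sym/farKa.
- by move=> ?; apply/far_sym/farKb.
- by case: (ltngtP i j) => [/farKv|/farKv/far_sym|/val_inj ->] //; rewrite eqxx.
Qed.

Lemma K_coloring_exists0 k n y : 0 < k -> 2 < n -> 0 < y < k * n - 1 ->
  exists c, pq_coloring (k * n - 1) k (@K_adj n) c /\ c Ka = 0 /\ c Kb = y.
Proof.
move=> k_gt0 n_gt2 /andP [y_gt0 y_lt]; set p := k * n - 1.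
have [y_le|y_gt] := leqP y (p - k).
  by exists (@K_std_coloring k n y); split => //; apply: pq_coloring_K_std => //; apply/andP.
exists ((fun u => (p - u) %% p) \o @K_std_coloring k n (p - y)); split; last first.
  by rewrite /= subn0 modnn subKn 1?ltnW // modn_small.
apply: pq_coloring_comp => [u _|u v|]; [apply: ltn_pmod; lia | exact: far_reflect |].
by apply: pq_coloring_K_std => //; nia.
Qed.

Lemma K_coloring_exists k n x y : 0 < k -> 2 < n ->
  x < k * n - 1 -> y < k * n - 1 -> x != y ->
  exists c, pq_coloring (k * n - 1) k (@K_adj n) c /\ c Ka = x /\ c Kb = y.
Proof.
move=> k_gt0 n_gt2 x_lt y_lt xy; set p := k * n - 1.
set y' := (y + (p - x)) %% p; have p_gt0 : 0 < p by lia.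
have shiftE : (y' + x) %% p = y.
  by rewrite modnDml -addnA subnK 1?ltnW // modnDr modn_small.
have y'_gt0 : 0 < y'.
  by rewrite lt0n; apply: contraNneq xy => y'0; rewrite -shiftE y'0 modn_small.
have y'_range : 0 < y' < p by rewrite y'_gt0 ltn_pmod.
have [c [cc [ca cb]]] := K_coloring_exists0 k_gt0 n_gt2 y'_range.
exists ((fun u => (u + x) %% p) \o c); split; last by rewrite /= ca cb add0n shiftE modn_small.
apply: pq_coloring_comp cc => [u _|u v ? ?]; first exact: ltn_pmod.
exact: far_shift.
Qed.

Theorem lemma3 (k n : nat) (hk : 2 <= k) (hn : 3 <= n) (x y : nat)
  (hx : x <= k * n - 2) (hy : y <= k * n - 2) :
  (exists c : Kvert n.-1 -> nat,
      pq_coloring (k * n - 1) k (@K_adj n) c /\ c Ka = x /\ c Kb = y)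
  <-> x <> y.
Proof.
split=> [[c [cc [<- <-]]]|/eqP xy]; first exact/eqP/(K_coloring_neq (ltnW hk) (ltnW hn) cc).
by apply: (K_coloring_exists _ _ _ _ xy); lia.
Qed.
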